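(* Let $(\mathcal G,p)$ be a $1$-closed CPS on the finite set $\Omega$ with $\mathcal G$ closed under unions and nonempty intersections and covering $\Omega$. For every event $E$ and state $\omega$: if $\omega\in E$ and $p_{m(\omega)}(E)=1$, then $m(\omega)\subseteq E$.
   Context: $\Omega$ is a finite set; every subset is an event. A CPS is a pair $(\mathcal G,p)$ where $\mathcal G$ is a family of nonempty subsets of $\Omega$ and $p$ assigns to each $G\in\mathcal G$ a probability measure $p_G$ on $\Omega$ with $p_G(G)=1$ and $p_G(E)=p_G(F)p_F(E)$ whenever $E\subseteq F\subseteq G$, $F,G\in\mathcal G$. Atom: $m(\omega)=\bigcap\{G\in\mathcal G:\omega\in G\}$. $(\mathcal G,p)$ is $1$-closed if every $L\subseteq G$ with $G\in\mathcal G$ and $p_G(L)=1$ belongs to $\mathcal G$. *)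

From mathcomp Require Import all_boot all_order all_algebra.
From mathcomp Require Import reals.
Set Implicit Arguments. Unset Strict Implicit. Unset Printing Implicit Defensive.
Import Order.TTheory GRing.Theory Num.Theory.
Local Open Scope ring_scope.

Section CPS.
Variables (R : realType) (Omega : finType).

Definition is_prob (mu : Omega -> R) : Prop :=
  (forall w, 0 <= mu w) /\ \sum_(w : Omega) mu w = 1.

Definition Pr (mu : Omega -> R) (E : {set Omega}) : R := \sum_(w in E) mu w.

Definition is_CPS (G : {set {set Omega}}) (p : {set Omega} -> Omega -> R) : Prop :=
  [/\ (forall A, A \in G -> A != set0),
      (forall A, A \in G -> is_prob (p A) /\ Pr (p A) A = 1) &
      (forall E F H : {set Omega}, E \subset F -> F \subset H -> F \in G -> H \in G ->
         Pr (p H) E = Pr (p H) F * Pr (p F) E)].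

Definition atom (G : {set {set Omega}}) (w : Omega) : {set Omega} :=
  \bigcap_(A in G | w \in A) A.

Definition one_closed (G : {set {set Omega}}) (p : {set Omega} -> Omega -> R) : Prop :=
  forall A L : {set Omega}, A \in G -> L \subset A -> Pr (p A) L = 1 -> L \in G.

Definition union_closed (G : {set {set Omega}}) : Prop :=
  forall A B, A \in G -> B \in G -> A :|: B \in G.

Definition nonempty_inter_closed (G : {set {set Omega}}) : Prop :=
  forall A B, A \in G -> B \in G -> A :&: B != set0 -> A :&: B \in G.

Definition covers (G : {set {set Omega}}) : Prop :=
  forall w : Omega, exists2 A, A \in G & w \in A.

End CPS.

(* Since G is closed under nonempty intersections and covers Omega, the atom
   M = m(w) is itself a member of G.  If p_M(E) = 1 then p_M(E :&: M) = 1, so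
   1-closedness puts E :&: M in G; it contains w, hence contains the atom M. *)
From mathcomp Require Import all_boot all_order all_algebra.
From mathcomp Require Import reals.
Set Implicit Arguments. Unset Strict Implicit. Unset Printing Implicit Defensive.
Import Order.TTheory GRing.Theory Num.Theory.
Local Open Scope ring_scope.

Section Atoms.
Variables (Omega : finType) (G : {set {set Omega}}).

Lemma atom_min (A : {set Omega}) (w : Omega) :
  A \in G -> w \in A -> atom G w \subset A.
Proof. by move=> AG wA; apply: bigcap_inf; rewrite AG. Qed.

Lemma mem_atom (w : Omega) : w \in atom G w.
Proof. by apply/bigcapP => A /andP[]. Qed.

Lemma atom_in_G (w : Omega) :
  nonempty_inter_closed G -> covers G -> atom G w \in G.
Proof.
move=> Hint /(_ w) [A0 A0G wA0].
suff /andP[A0MG _] : (A0 :&: atom G w \in G) && (w \in atom G w).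
  by rewrite (setIidPr (atom_min A0G wA0)) in A0MG.
have meet_in_G X : X \in G -> w \in X -> A0 :&: X \in G.
  by move=> XG wX; apply: Hint => //; apply/set0Pn; exists w; rewrite inE wA0.
(* Intersecting with A0 keeps the empty intersection [set: Omega], which need
   not lie in G, inside G. *)
apply: (big_ind (fun X => (A0 :&: X \in G) && (w \in X))).
- by rewrite setIT A0G inE.
- move=> X Y /andP[XG wX] /andP[YG wY].
  have wXY : w \in X :&: Y by rewrite inE wX.
  rewrite wXY andbT -[A0 in A0 :&: _]setIid setIACA.
  by apply: Hint => //; apply/set0Pn; exists w; rewrite -setIACA setIid inE wA0.
- by move=> A /andP[AG wA]; rewrite meet_in_G.
Qed.

End Atoms.

Section FiniteProbability.
Variables (R : realType) (Omega : finType) (mu : Omega -> R).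
Hypothesis mu_prob : is_prob mu.

Lemma Pr_setC (A : {set Omega}) : Pr mu (~: A) = 1 - Pr mu A.
Proof.
case: mu_prob => _ <-; rewrite /Pr (bigID (mem A) predT) /= addrC addrK.
by apply: eq_bigl => x; rewrite inE.
Qed.

Lemma Pr_full_out (M : {set Omega}) (x : Omega) :
  Pr mu M = 1 -> x \notin M -> mu x = 0.
Proof.
move=> PM xM; have [mu_ge0 _] := mu_prob.
have : Pr mu (~: M) = 0 by rewrite Pr_setC PM subrr.
rewrite /Pr (big_setD1 x) ?inE //= => /eqP.
by rewrite paddr_eq0 ?sumr_ge0 // => /andP[/eqP].
Qed.

Lemma Pr_setI_full (E M : {set Omega}) :
  Pr mu M = 1 -> Pr mu (E :&: M) = Pr mu E.
Proof.
move=> PM; rewrite [RHS]/Pr (big_setID M) /= [X in _ + X]big1 ?addr0 //.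
move=> x; rewrite inE => /andP[xM _]; apply: Pr_full_out PM xM.
Qed.

End FiniteProbability.

Theorem lemma1 (R : realType) (Omega : finType)
  (G : {set {set Omega}}) (p : {set Omega} -> Omega -> R) :
  is_CPS G p -> one_closed G p -> union_closed G ->
  nonempty_inter_closed G -> covers G ->
  forall (E : {set Omega}) (w : Omega),
    w \in E -> Pr (p (atom G w)) E = 1 -> atom G w \subset E.
Proof.
move=> [_ Hpr _] H1 _ Hint Hcov E w wE PE.
have MG := atom_in_G w Hint Hcov.
have [prob_M PM] := Hpr _ MG.
have EMG : E :&: atom G w \in G.
  by apply: H1 MG (subsetIr _ _) _; rewrite Pr_setI_full.
apply: subset_trans (subsetIl E (atom G w)).
by apply: atom_min EMG _; rewrite inE wE mem_atom.
Qed.
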